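(* Let $n\geq 3$. An $(n,3,3,3)$ Gog (resp. GOGAm) pentagon is the array $(X_{i,j})_{3\geq i\geq j\geq 1}$ formed by the bottom three rows of some Gog (resp. GOGAm) triangle of size $n$. There is a bijection between the set of $(n,3,3,3)$ Gog pentagons and the set of $(n,3,3,3)$ GOGAm pentagons; in particular they are equinumerous.
   Context: A Gelfand–Tsetlin triangle of size $n$ is an array $X=(X_{i,j})_{n\geq i\geq j\geq 1}$ of positive integers (row $n$ is the top row, row $1$ the bottom) with $X_{i+1,j}\leq X_{i,j}\leq X_{i+1,j+1}$ for all $n-1\geq i\geq j\geq 1$. A Gog triangle of size $n$ is a Gelfand–Tsetlin triangle with strictly increasing rows and top row $X_{n,j}=j$, $1\leq j\leq n$. A Magog triangle of size $n$ is a Gelfand–Tsetlin triangle with $X_{j,j}\leq j$ for all $j$. For $1\leq k\leq n-1$, the involution $s_k$ on Gelfand–Tsetlin triangles of size $n$ changes only row $k$, replacing each $X_{k,j}$ by $\max(X_{k+1,j},X_{k-1,j-1})+\min(X_{k+1,j+1},X_{k-1,j})-X_{k,j}$, where any term referring to an entry outside the triangle is omitted. Put $\omega_j=s_j\circ\cdots\circ s_1$ and $S=\omega_1\circ\omega_2\circ\cdots\circ\omega_{n-1}$. A GOGAm triangle of size $n$ is a Gelfand–Tsetlin triangle $X$ with $S(X)$ a Magog triangle. (Equivalently, by a known result, $X_{n,n}\leq n$ and for all $1\leq k\leq n-1$ and all $n=j_0>\dots>j_{n-k}\geq 1$: $\sum_{i=0}^{n-k-1}(X_{j_i+i,j_i}-X_{j_{i+1}+i,j_{i+1}})+X_{j_{n-k}+n-k,j_{n-k}}\leq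 k$.) *)

From mathcomp Require Import all_boot.
Set Implicit Arguments. Unset Strict Implicit. Unset Printing Implicit Defensive.

(* A triangle is a function X : nat -> nat -> nat; X i j is the entry X_{i,j};
   only the entries with n >= i >= j >= 1 are meaningful. *)
Definition triangle := nat -> nat -> nat.

Definition GT (n : nat) (X : triangle) : Prop :=
  (forall i j, 1 <= j -> j <= i -> i <= n -> 0 < X i j) /\
  (forall i j, 1 <= j -> j <= i -> i < n ->
     X i.+1 j <= X i j /\ X i j <= X i.+1 j.+1).

Definition Gog (n : nat) (X : triangle) : Prop :=
  GT n X /\
  (forall i j, 1 <= j -> j < i -> i <= n -> X i j < X i j.+1) /\
  (forall j, 1 <= j -> j <= n -> X n j = j).

Definition Magog (n : nat) (X : triangle) : Prop :=
  GT n X /\ (forall j, 1 <= j -> j <= n -> X j j <= j).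

(* The involution s_k (changes only row k); terms referring to entries
   outside the triangle are omitted.  For k <= n-1, the entries
   X_{k+1,j}, X_{k+1,j+1} always exist; X_{k-1,j-1} exists iff j >= 2;
   X_{k-1,j} exists iff j <= k-1. *)
Definition s_op (k : nat) (X : triangle) : triangle :=
  fun i j =>
    if (i == k) && (1 <= j <= k) then
      let lo := if 2 <= j then maxn (X k.+1 j) (X k.-1 j.-1) else X k.+1 j in
      let hi := if j < k then minn (X k.+1 j.+1) (X k.-1 j) else X k.+1 j.+1 in
      lo + hi - X k j
    else X i j.

Fixpoint omega (j : nat) (X : triangle) : triangle :=
  match j with
  | 0 => X
  | j'.+1 => s_op j'.+1 (omega j' X)
  end.

Definition S_op (n : nat) (X : triangle) : triangle :=
  foldr (fun j Y => omega j Y) X (iota 1 n.-1).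

Definition GOGAm (n : nat) (X : triangle) : Prop :=
  GT n X /\ Magog n (S_op n X).

Definition pentagon_of (X : triangle) : 6.-tuple nat :=
  [tuple X 3 1; X 3 2; X 3 3; X 2 1; X 2 2; X 1 1].

Definition GogPentagon (n : nat) (P : 6.-tuple nat) : Prop :=
  exists X, Gog n X /\ pentagon_of X = P.

Definition GOGAmPentagon (n : nat) (P : 6.-tuple nat) : Prop :=
  exists X, GOGAm n X /\ pentagon_of X = P.

From mathcomp Require Import all_boot zify.
From Stdlib Require Import FunctionalExtensionality ProofIrrelevance.
Set Implicit Arguments. Unset Strict Implicit. Unset Printing Implicit Defensive.

(* Both kinds of pentagon are cut out by explicit linear inequalities.  For a Gog
   pentagon these are interlacing, strict rows and X_{3,3} <= n; for a GOGAm pentagon,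
   interlacing and three inequalities coming from the Magog bounds on the last three
   diagonal entries of S(X), which telescope along the diagonal of omega_j.  Conversely
   every pentagon satisfying them extends: for Gog by rows (1, .., i-3, max(a1, i-2),
   max(a2, i-1), max(a3, i)), for GOGAm by rows (1, .., 1, a1, a2, a3), whose image under
   S is computed pass by pass.  In the gap coordinates of the pentagon the Gog conditions
   leave the gap n - X_{3,3} free and the GOGAm conditions leave X_{3,3} - X_{2,2} free;
   a piecewise-linear bijection exchanging these two gaps and rearranging the others
   (preserving their total) matches the two sets. *)


Ltac decide_ifs := repeat match goal with |- context[if ?b then _ else _] =>
  first [ rewrite (_ : b = true); last by lia
        | rewrite (_ : b = false); last by lia
        | let h := fresh "h" in case: (boolP b) => h ] end.

Lemma s_op_row_neq k X i j : i != k -> s_op k X i j = X i j.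
Proof. by rewrite /s_op => /negbTE ->. Qed.

Lemma omega_row_gt m X i j : m < i -> omega m X i j = X i j.
Proof.
elim: m => [//|m IH] lt_mi /=.
by rewrite s_op_row_neq ?IH //; lia.
Qed.

Lemma omega_row_le k m X i j : i <= k -> k <= m -> omega m X i j = omega k X i j.
Proof.
move=> le_ik; elim: m => [|m IH] le_km; first by have -> : k = 0 by lia.
have [lt_km|ge_km] := ltnP k m.+1; last by have -> : k = m.+1 by lia.
by rewrite /= s_op_row_neq ?IH //; lia.
Qed.

Lemma foldr_omega_row_gt l X i j : all (fun m => m < i) l ->
  foldr (fun j Y => omega j Y) X l i j = X i j.
Proof.
elim: l => [//|m l IH] /= /andP [lt_mi Hl].
by rewrite omega_row_gt // IH.
Qed.

Lemma S_op_last2 n X : 3 <= n ->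
  S_op n X = foldr (fun j Y => omega j Y) (omega (n - 2) (omega (n - 1) X)) (iota 1 (n - 3)).
Proof.
move=> n_ge3; rewrite /S_op (_ : n.-1 = (n - 3) + 2); last by lia.
rewrite iotaD foldr_cat (_ : iota (1 + (n - 3)) 2 = [:: n - 2; n - 1]) //.
by rewrite /=; congr [:: _; _]; lia.
Qed.

Lemma S_op_top_diag n X : 3 <= n ->
  [/\ S_op n X n n = X n n,
      S_op n X (n - 1) (n - 1) = omega (n - 1) X (n - 1) (n - 1) &
      S_op n X (n - 2) (n - 2) = omega (n - 2) (omega (n - 1) X) (n - 2) (n - 2)].
Proof.
move=> n_ge3; rewrite S_op_last2 //.
have iota_lt i : n - 3 < i -> all (fun m => m < i) (iota 1 (n - 3)).
  by move=> lt_i; apply/allP => m; rewrite mem_iota; lia.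
rewrite !foldr_omega_row_gt ?iota_lt; try lia.
split=> //; first by rewrite !omega_row_gt //; lia.
by rewrite omega_row_gt //; lia.
Qed.

Lemma omega_diag1 X : omega 1 X 1 1 = X 2 1 + X 2 2 - X 1 1.
Proof. by []. Qed.

Lemma omega_diagS j X : 1 <= j ->
  omega j.+1 X j.+1 j.+1 = maxn (X j.+2 j.+1) (omega j X j j) + X j.+2 j.+2 - X j.+1 j.+1.
Proof.
move=> j_gt0; rewrite /= /s_op eqxx /= ltnSn ltnn (_ : 1 < j.+1) //.
by rewrite !(@omega_row_gt j X j.+2) // (@omega_row_gt j X j.+1).
Qed.

Lemma omega_diag_ge j X : 1 <= j -> X j.+1 j + X j.+1 j.+1 <= omega j X j j + X j j.
Proof.
case: j => [//|[_|j j_gt0]]; first by rewrite omega_diag1; lia.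
by rewrite omega_diagS //; lia.
Qed.

Lemma omega_diag_telescope j m X : 1 <= j -> j <= m ->
  omega j X j j + X m.+1 m.+1 <= omega m X m m + X j.+1 j.+1.
Proof.
move=> j_gt0; elim: m => [|m IH] le_jm; first lia.
have [lt_jm|ge_jm] := ltnP j m.+1; last by have -> : j = m.+1 by lia.
have := IH ltac:(lia); rewrite omega_diagS; lia.
Qed.

Lemma GT_diag_le n X i k : GT n X -> 1 <= i -> i + k <= n -> X i i <= X (i + k) (i + k).
Proof.
case=> _ interl i_gt0; elim: k => [|k IH] le_ikn; first by rewrite addn0.
have := interl (i + k) (i + k) ltac:(lia) (leqnn _) ltac:(lia).
by rewrite addnS; have := IH ltac:(lia); lia.
Qed.

Lemma GT_bottom_rows n X : 3 <= n -> GT n X ->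
  [&& 0 < X 3 1, X 3 1 <= X 2 1, X 2 1 <= X 3 2, X 3 2 <= X 2 2, X 2 2 <= X 3 3,
      X 2 1 <= X 1 1, X 1 1 <= X 2 2 & X 3 3 <= X n n].
Proof.
move=> n_ge3 HX; have [pos interl] := HX.
have := GT_diag_le (i := 3) (k := n - 3) HX erefl ltac:(lia).
rewrite (_ : 3 + (n - 3) = n); last by lia.
have := interl 1 1 erefl erefl ltac:(lia).
have := interl 2 1 erefl erefl ltac:(lia).
have := interl 2 2 erefl erefl ltac:(lia).
have := pos 3 1 erefl erefl n_ge3.
lia.
Qed.

Lemma Gog_bottom_rows n X : 3 <= n -> Gog n X ->
  [&& X 3 1 < X 3 2, X 3 2 < X 3 3, X 2 1 < X 2 2 & X n n == n].
Proof.
move=> n_ge3 [_ [Hrow Htop]].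
have := Htop n ltac:(lia) (leqnn _).
have := Hrow 3 1 erefl erefl n_ge3.
have := Hrow 3 2 erefl erefl n_ge3.
have := Hrow 2 1 erefl erefl ltac:(lia).
lia.
Qed.

Lemma GOGAm_bottom_rows n X : 3 <= n -> GOGAm n X ->
  [&& X n n <= n, X 3 3 + X 2 1 + 1 <= n + X 1 1, X 3 2 + X 3 3 + 1 <= n + X 2 2
    & X 3 1 + X 3 2 + X 3 3 + 2 <= n + X 2 1 + X 2 2].
Proof.
move=> n_ge3 [HX [_ Hmag]].
have [Sn Sn1 Sn2] := S_op_top_diag X n_ge3.
have := Hmag n ltac:(lia) (leqnn _); rewrite Sn.
have := Hmag (n - 1) ltac:(lia) ltac:(lia); rewrite Sn1.
have := Hmag (n - 2) ltac:(lia) ltac:(lia); rewrite Sn2.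
set X' := omega (n - 1) X.
have := omega_diag_telescope X' (j := 1) (m := n - 2) erefl ltac:(lia).
have := omega_diag_ge X' (j := 1) erefl.
have -> : X' 1 1 = X 2 1 + X 2 2 - X 1 1 by rewrite /X' (@omega_row_le 1) //; lia.
have -> : X' 2 1 = X 3 1 + minn (X 3 2) (X 2 1 + X 2 2 - X 1 1) - X 2 1.
  by rewrite /X' (@omega_row_le 2) //; lia.
rewrite (_ : (n - 2).+1 = n - 1); last by lia.
have := omega_diag_telescope X (j := 1) (m := n - 1) erefl ltac:(lia).
have := omega_diag_telescope X (j := 2) (m := n - 1) erefl ltac:(lia).
have := omega_diag_ge X (j := 2) erefl.
rewrite omega_diag1 (_ : (n - 1).+1 = n) -/X'; last by lia.
have := GT_bottom_rows n_ge3 HX.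
lia.
Qed.

Definition overlay (N Z : triangle) (k : nat) : triangle := fun i j =>
  if (0 < j <= i) && (i <= k) then N i j else Z i j.

Lemma overlay0 N Z : overlay N Z 0 = Z.
Proof.
apply: functional_extensionality => i; apply: functional_extensionality => j.
by rewrite /overlay; decide_ifs.
Qed.

Lemma omega_overlay N Z K :
  (forall k, k < K -> s_op k.+1 (overlay N Z k) = overlay N Z k.+1) ->
  forall k, k <= K -> omega k Z = overlay N Z k.
Proof.
move=> Hstep; elim=> [|k IH] le_kK; first by rewrite overlay0.
by rewrite /= IH ?Hstep //; lia.
Qed.

Definition ones : triangle := fun _ _ => 1.

Lemma omega_ones m Z : (forall i j, 0 < j <= i -> i <= m.+1 -> Z i j = 1) -> omega m Z = Z.
Proof.
elim: m => [//|m IH] Zones /=.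
rewrite IH; last by move=> i j Hj Hi; apply: Zones; lia.
apply: functional_extensionality => i; apply: functional_extensionality => j.
rewrite /s_op; case: ifP => // /andP [/eqP -> Hj].
by case: (ltnP 1 j) => ?; case: (ltnP j m.+1) => ?; rewrite !Zones; lia.
Qed.

Lemma foldr_omega_ones l Z r : (forall i j, 0 < j <= i -> i <= r -> Z i j = 1) ->
  all (fun m => m < r) l -> foldr (fun j Y => omega j Y) Z l = Z.
Proof.
move=> Zones; elim: l => [//|m l IH] /= /andP [lt_mr Hl].
by rewrite IH // omega_ones // => i j *; apply: Zones; lia.
Qed.

Definition ones_end2 (w u v : nat) : triangle := fun i j =>
  if i == 1 then w else if j + 2 <= i then 1 else if j + 1 == i then u else v.

Definition ones_end1 (t : nat) : triangle := fun i j => if j + 1 <= i then 1 else t.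

(* On [gogam_extension], omega_{n-1} turns rows <= n-1 into [ones_end2 w u v], then
   omega_{n-2} turns rows <= n-2 into [ones_end1 t], and the remaining omega_k only
   meet rows of ones. *)
Section GOGAmExtension.

Variables a1 a2 a3 b1 b2 c : nat.

Definition gogam_extension : triangle := fun i j =>
  if i == 1 then c else if i == 2 then (if j == 1 then b1 else b2)
  else if j + 3 <= i then 1 else if j + 2 == i then a1
  else if j + 1 == i then a2 else a3.

Hypothesis interlace : [&& 0 < a1, a1 <= b1, b1 <= a2, a2 <= b2, b2 <= a3, b1 <= c & c <= b2].
Variables w u v t : nat.
Hypothesis def_w : w = b1 + b2 - c.
Hypothesis def_u : u = a1 + minn a2 w - b1.
Hypothesis def_v : v = maxn a2 w + a3 - b2.

Lemma first_pass_step k :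
  s_op k.+1 (overlay (ones_end2 w u v) gogam_extension k) =
  overlay (ones_end2 w u v) gogam_extension k.+1.
Proof.
apply: functional_extensionality => i; apply: functional_extensionality => j.
by rewrite /s_op /overlay /ones_end2 /gogam_extension; decide_ifs; lia.
Qed.

Lemma uv_bounds : [&& a1 <= u, u <= a2, a2 <= v, v <= a3, u <= w & w <= v].
Proof. lia. Qed.

Variable n : nat.
Hypothesis n_ge3 : 3 <= n.
Hypothesis def_t : t = u + v - w.

Let first_pass := overlay (ones_end2 w u v) gogam_extension (n - 1).
Let second_pass := overlay (ones_end1 t) first_pass (n - 2).

Lemma second_pass_step k : k.+1 <= n - 2 ->
  s_op k.+1 (overlay (ones_end1 t) first_pass k) = overlay (ones_end1 t) first_pass k.+1.
Proof.
move=> lt_kn; have bounds := uv_bounds; clear def_u def_v.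
apply: functional_extensionality => i; apply: functional_extensionality => j.
by rewrite /s_op /first_pass /overlay /ones_end1 /ones_end2 /gogam_extension; decide_ifs; lia.
Qed.

Lemma third_pass_step k : k.+1 <= n - 3 ->
  s_op k.+1 (overlay ones second_pass k) = overlay ones second_pass k.+1.
Proof.
move=> lt_kn; have bounds := uv_bounds; clear def_u def_v.
apply: functional_extensionality => i; apply: functional_extensionality => j.
rewrite /s_op /second_pass /first_pass /overlay /ones /ones_end1 /ones_end2 /gogam_extension.
by decide_ifs; lia.
Qed.

Lemma S_op_gogam_extension : S_op n gogam_extension = overlay ones second_pass (n - 3).
Proof.
have first_passE : omega (n - 1) gogam_extension = first_pass.
  apply: (omega_overlay (K := n - 1)) => // k _; exact: first_pass_step.
have second_passE : omega (n - 2) first_pass = second_pass.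
  by apply: (omega_overlay (K := n - 2)) => // k lt_kn; apply: second_pass_step; lia.
rewrite S_op_last2 // first_passE second_passE.
have third_passE : omega (n - 3) second_pass = overlay ones second_pass (n - 3).
  by apply: (omega_overlay (K := n - 3)) => // k lt_kn; apply: third_pass_step; lia.
case def_n3 : (n - 3) third_passE => [|k] third_passE; first by rewrite overlay0.
rewrite (_ : iota 1 k.+1 = iota 1 k ++ [:: k.+1]); last by rewrite -[X in iota 1 X]addn1 iotaD.
rewrite foldr_cat (_ : foldr _ second_pass [:: k.+1] = omega k.+1 second_pass) // third_passE.
apply: (foldr_omega_ones (r := k.+1)).
  by move=> i j *; rewrite /overlay /ones; decide_ifs; lia.
by apply/allP => m; rewrite mem_iota; lia.
Qed.

Lemma GOGAm_gogam_extension_diag : a3 <= n -> v <= n - 1 -> t <= n - 2 -> GOGAm n gogam_extension.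
Proof.
move=> le_a3n le_vn le_tn; split.
  by rewrite /gogam_extension; split=> i j *; [|split]; decide_ifs; lia.
rewrite S_op_gogam_extension /second_pass /first_pass /overlay /ones /ones_end1 /ones_end2.
rewrite /gogam_extension; split; first split.
- by move=> i j *; decide_ifs; lia.
- by move=> i j *; split; decide_ifs; lia.
- by move=> j *; decide_ifs; lia.
Qed.

End GOGAmExtension.

Lemma GOGAm_gogam_extension n a1 a2 a3 b1 b2 c : 3 <= n ->
  [&& 0 < a1, a1 <= b1, b1 <= a2, a2 <= b2, b2 <= a3, a3 <= n, b1 <= c, c <= b2,
      a1 + a2 + a3 + 2 <= n + b1 + b2, a3 + b1 + 1 <= n + c & a2 + a3 + 1 <= n + b2] ->
  GOGAm n (gogam_extension a1 a2 a3 b1 b2 c).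
Proof.
move=> n_ge3 ineqs.
have interlace : [&& 0 < a1, a1 <= b1, b1 <= a2, a2 <= b2, b2 <= a3, b1 <= c & c <= b2] by lia.
pose w := b1 + b2 - c; pose u := a1 + minn a2 w - b1; pose v := maxn a2 w + a3 - b2.
by apply: (GOGAm_gogam_extension_diag interlace (w := w) (u := u) (v := v) (t := u + v - w));
  rewrite /u /v /w; lia.
Qed.

Definition gog_extension (a1 a2 a3 b1 b2 c : nat) : triangle := fun i j =>
  if i == 1 then c else if i == 2 then (if j == 1 then b1 else b2)
  else if j + 3 <= i then j else if j + 2 == i then maxn a1 j
  else if j + 1 == i then maxn a2 j else maxn a3 j.

Lemma Gog_gog_extension n a1 a2 a3 b1 b2 c : 3 <= n ->
  [&& 0 < a1, a1 < a2, a2 < a3, a3 <= n, a1 <= b1, b1 <= a2, a2 <= b2, b2 <= a3,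
      b1 < b2, b1 <= c & c <= b2] ->
  Gog n (gog_extension a1 a2 a3 b1 b2 c).
Proof.
rewrite /gog_extension => n_ge3 ineqs; split; first split.
- by move=> i j *; decide_ifs; lia.
- by move=> i j *; split; decide_ifs; lia.
split.
- by move=> i j *; decide_ifs; lia.
- by move=> j *; decide_ifs; lia.
Qed.

(* [Gaps x1 x2 x3 x4 d y] encodes, given a1 and n = a1 + x1 + x2 + x3 + x4 + d, the
   pentagon a1 <= b1 = a1 + x1 <= a2 = b1 + x2 <= b2 = a2 + x3 <= a3 = b2 + x4 <= n,
   c = b1 + y. *)
Variant gaps := Gaps of nat & nat & nat & nat & nat & nat.

Definition gaps_total (g : gaps) : nat :=
  let: Gaps x1 x2 x3 x4 d _ := g in x1 + x2 + x3 + x4 + d.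

Definition gog_gaps (g : gaps) : bool :=
  let: Gaps x1 x2 x3 x4 _ y := g in
  [&& 0 < x1 + x2, 0 < x3 + x4, 0 < x2 + x3 & y <= x2 + x3].

Definition gogam_gaps (g : gaps) : bool :=
  let: Gaps x1 x2 x3 _ d y := g in
  [&& 1 < x1 + x3 + d, 0 < d + y, 0 < x3 + d & y <= x2 + x3].

Definition gog_to_gogam_gaps (g : gaps) : gaps :=
  let: Gaps x1 x2 x3 x4 d y := g in
  if [&& 0 < x2, 0 < x3 & y + 2 <= x2 + x3] then Gaps x1 x2.-1 x3.-1 d x4.+2 y
  else if x2 == 0 then Gaps x1.-1 x4 x3 d 1 y
  else if x3 == 0 then Gaps x4.-1 x1 x2.+1 d 0 (x2.+1 - y)
  else if y == x2 + x3 then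
    if 0 < x4 then Gaps x1 (x2 + x4).-1 x3 d 1 (x2 + x3)
    else Gaps x3 (x1 + x2).-1 0 d 1 x1
  else if 0 < x4 then Gaps x1 (x2 + x4).-1 x3.+1 d 0 (x2 + x3).+1
  else Gaps x3 (x1 + x2).-1 1 d 0 x1.+1.

Definition gogam_to_gog_gaps (g : gaps) : gaps :=
  let: Gaps x1 x2 x3 x4 d y := g in
  if 1 < d then Gaps x1 x2.+1 x3.+1 d.-2 x4 y
  else if d == 1 then
    if x3 == 0 then Gaps y (x2.+1 - y) x1 0 x4 (x1 + x2.+1 - y)
    else if y <= x3 then Gaps x1.+1 0 x3 x2 x4 y
    else Gaps x1 (y - x3) x3 ((x2 + x3).+1 - y) x4 y
  else if x3 <= 1 then Gaps y.-1 (x2.+2 - y) x1 0 x4 ((x1 + x2).+1 - y)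
  else if y <= x3 then Gaps x2 x3.-1 0 x1.+1 x4 (x3 - y)
  else Gaps x1 (y - x3) x3.-1 ((x2 + x3).+1 - y) x4 y.-2.

Lemma gog_to_gogam_gapsP g : gog_gaps g -> gogam_gaps (gog_to_gogam_gaps g).
Proof. by case: g => x1 x2 x3 x4 d y /= H; decide_ifs => /=; lia. Qed.

Lemma gogam_to_gog_gapsP g : gogam_gaps g -> gog_gaps (gogam_to_gog_gaps g).
Proof. by case: g => x1 x2 x3 x4 d y /= H; decide_ifs => /=; lia. Qed.

Lemma gaps_total_gog_to_gogam g : gog_gaps g ->
  gaps_total (gog_to_gogam_gaps g) = gaps_total g.
Proof. by case: g => x1 x2 x3 x4 d y /= H; decide_ifs => /=; lia. Qed.

Lemma gaps_total_gogam_to_gog g : gogam_gaps g ->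
  gaps_total (gogam_to_gog_gaps g) = gaps_total g.
Proof. by case: g => x1 x2 x3 x4 d y /= H; decide_ifs => /=; lia. Qed.

Lemma gog_to_gogam_gapsK g : gog_gaps g -> gogam_to_gog_gaps (gog_to_gogam_gaps g) = g.
Proof.
case: g => x1 x2 x3 x4 d y /= H.
by decide_ifs => /=; decide_ifs; congr Gaps; lia.
Qed.

Lemma gogam_to_gog_gapsK g : gogam_gaps g -> gog_to_gogam_gaps (gogam_to_gog_gaps g) = g.
Proof.
case: g => x1 x2 x3 x4 d y /= H.
by decide_ifs => /=; decide_ifs; congr Gaps; lia.
Qed.

Definition pentagon_of_gaps (a1 : nat) (g : gaps) : 6.-tuple nat :=
  let: Gaps x1 x2 x3 x4 _ y := g in
  [tuple a1; a1 + x1 + x2; a1 + x1 + x2 + x3 + x4; a1 + x1; a1 + x1 + x2 + x3; a1 + x1 + y].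

Definition gaps_of_pentagon (n : nat) (P : 6.-tuple nat) : gaps :=
  let a k := nth 0 P k in
  Gaps (a 3 - a 0) (a 1 - a 3) (a 4 - a 1) (a 2 - a 4) (n - a 2) (a 5 - a 3).

Definition map_gaps (n : nat) (f : gaps -> gaps) (P : 6.-tuple nat) : 6.-tuple nat :=
  pentagon_of_gaps (nth 0 P 0) (f (gaps_of_pentagon n P)).

Lemma map_gaps_pentagon n f a1 g : a1 + gaps_total g = n ->
  map_gaps n f (pentagon_of_gaps a1 g) = pentagon_of_gaps a1 (f g).
Proof.
case: g => x1 x2 x3 x4 d y /= total; rewrite /map_gaps /gaps_of_pentagon /=.
by congr (pentagon_of_gaps _ (f _)); congr Gaps; lia.
Qed.

Lemma GogPentagonP n P : 3 <= n -> GogPentagon n P <->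
  exists a1 g, [/\ 0 < a1, a1 + gaps_total g = n, gog_gaps g & P = pentagon_of_gaps a1 g].
Proof.
move=> n_ge3; split.
- case=> X [HX <-]; have := GT_bottom_rows n_ge3 HX.1; have := Gog_bottom_rows n_ge3 HX.
  exists (X 3 1), (gaps_of_pentagon n (pentagon_of X)); split=> /=; try lia.
  by apply: val_inj => /=; congr [:: _; _; _; _; _; _]; lia.
- case=> a1 [[x1 x2 x3 x4 d y] /= [a1_gt0 total gaps ->]].
  exists (gog_extension a1 (a1 + x1 + x2) (a1 + x1 + x2 + x3 + x4) (a1 + x1)
                        (a1 + x1 + x2 + x3) (a1 + x1 + y)).
  split; first by apply: Gog_gog_extension => //; lia.
  by apply: val_inj; rewrite /= /gog_extension /=; congr [:: _; _; _; _; _; _]; lia.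
Qed.

Lemma GOGAmPentagonP n P : 3 <= n -> GOGAmPentagon n P <->
  exists a1 g, [/\ 0 < a1, a1 + gaps_total g = n, gogam_gaps g & P = pentagon_of_gaps a1 g].
Proof.
move=> n_ge3; split.
- case=> X [HX <-]; have := GT_bottom_rows n_ge3 HX.1; have := GOGAm_bottom_rows n_ge3 HX.
  exists (X 3 1), (gaps_of_pentagon n (pentagon_of X)); split=> /=; try lia.
  by apply: val_inj => /=; congr [:: _; _; _; _; _; _]; lia.
- case=> a1 [[x1 x2 x3 x4 d y] /= [a1_gt0 total gaps ->]].
  exists (gogam_extension a1 (a1 + x1 + x2) (a1 + x1 + x2 + x3 + x4) (a1 + x1)
                          (a1 + x1 + x2 + x3) (a1 + x1 + y)).
  by split=> //; apply: GOGAm_gogam_extension => //; lia.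
Qed.

Lemma sig_bijective (T : Type) (A B : T -> Prop) (f g : T -> T) :
  (forall x, A x -> B (f x)) -> (forall y, B y -> A (g y)) ->
  (forall x, A x -> g (f x) = x) -> (forall y, B y -> f (g y) = y) ->
  exists h : {x | A x} -> {y | B y}, bijective h.
Proof.
move=> fAB gBA fK gK.
exists (fun x => exist B (f (proj1_sig x)) (fAB _ (proj2_sig x))).
exists (fun y => exist A (g (proj1_sig y)) (gBA _ (proj2_sig y))).
- by case=> x Ax; apply: eq_sig_hprop => /= [? ? ?|]; [apply: proof_irrelevance | apply: fK].
- by case=> y By; apply: eq_sig_hprop => /= [? ? ?|]; [apply: proof_irrelevance | apply: gK].
Qed.

Theorem mainTheorem3 (n : nat) (hn : 3 <= n) :
  exists f : {P : 6.-tuple nat | GogPentagon n P} ->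
             {P : 6.-tuple nat | GOGAmPentagon n P},
    bijective f.
Proof.
apply: (sig_bijective (f := map_gaps n gog_to_gogam_gaps) (g := map_gaps n gogam_to_gog_gaps)).
- move=> P /(GogPentagonP _ hn) [a1 [g [a1_gt0 total gP ->]]].
  apply/(GOGAmPentagonP _ hn); exists a1, (gog_to_gogam_gaps g).
  by rewrite map_gaps_pentagon // gaps_total_gog_to_gogam // gog_to_gogam_gapsP.
- move=> P /(GOGAmPentagonP _ hn) [a1 [g [a1_gt0 total gP ->]]].
  apply/(GogPentagonP _ hn); exists a1, (gogam_to_gog_gaps g).
  by rewrite map_gaps_pentagon // gaps_total_gogam_to_gog // gogam_to_gog_gapsP.
- move=> P /(GogPentagonP _ hn) [a1 [g [_ total gP ->]]].
  by rewrite !map_gaps_pentagon ?gog_to_gogam_gapsK // gaps_total_gog_to_gogam.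
- move=> P /(GOGAmPentagonP _ hn) [a1 [g [_ total gP ->]]].
  by rewrite !map_gaps_pentagon ?gogam_to_gog_gapsK // gaps_total_gogam_to_gog.
Qed.
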